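(* Let $W=W_{\mathrm{aff}}\rtimes\Omega$ be an extended Coxeter group and let $1\to T\to G\to W\to1$ be a group extension of $W$ by an abelian group $T$ (written multiplicatively, with the $W$-action on $T$ induced by conjugation in $G$), together with a set-theoretic section $n:W\to G$ of $G\to W$ such that $n(ww')=n(w)n(w')$ whenever $\ell(ww')=\ell(w)+\ell(w')$. Let $\phi(w,w'):=n(w)n(w')n(ww')^{-1}\in T$. Then there is a unique $W$-equivariant group homomorphism $h:\mathbb Z[\mathfrak H]\to T$ with $h(\mathbf a_s)=n(s)^2$ for all $s\in S$, and \[ \phi(w,w')=h\big(\mathbb X(w,w')\big)\quad\text{for all } w,w'\in W. \]
   Context: For a Coxeter group $(W_{\mathrm{aff}},S)$ with length $\ell$, $\mathfrak H=\{vsv^{-1}:v\in W_{\mathrm{aff}},s\in S\}$ is the set of hyperplanes; for $v=s_1\cdots s_r$ reduced the hyperplanes separating $1$ and $v$ are $(s_1\cdots s_{i-1})s_i(s_1\cdots s_{i-1})^{-1}$, and $H$ separates $v_1,v_2$ iff $v_1^{-1}Hv_1$ separates $1$ and $v_1^{-1}v_2$. Extended Coxeter group: $W=W_{\mathrm{aff}}\rtimes\Omega$ with $(W_{\mathrm{aff}},S)$ Coxeter and $\Omega$ preserving $S$ by conjugation; $\ell(vu)=\ell(v)$ and $vu$ is identified with the chamber $v$ for questions of separation ($v\in W_{\mathrm{aff}},u\in\Omega$). $W$ acts on $\mathfrak H$ by conjugation, hence on the free abelian group $\mathbb Z[\mathfrak H]$ (written multiplicatively, generators $\mathbf a_H$).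 $\mathbb X(w,w')=\prod_H\mathbf a_H\in\mathbb Z[\mathfrak H]$, product over all $H\in\mathfrak H$ separating both $1$ from $w$ and $w$ from $ww'$. *)

From Stdlib Require Import List Arith.
Import ListNotations.

Set Implicit Arguments.

Record group := Group {
  gcar :> Type;
  gmul : gcar -> gcar -> gcar;
  gone : gcar;
  ginv : gcar -> gcar;
  gmulA : forall x y z, gmul x (gmul y z) = gmul (gmul x y) z;
  gmul1l : forall x, gmul gone x = x;
  gmul1r : forall x, gmul x gone = x;
  gmulVl : forall x, gmul (ginv x) x = gone;
  gmulVr : forall x, gmul x (ginv x) = gone
}.
Arguments gmul {g} _ _.
Arguments gone {g}.
Arguments ginv {g} _.

Fixpoint gpow {g : group} (x : g) (m : nat) : g :=
  match m with O => gone | Datatypes.S k => gmul x (@gpow g x k) end.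

Section Defs.
Variable W : group.

Definition prodl (l : list W) : W := fold_right gmul gone l.


Variable Sgen : W -> Prop.

Definition is_word (l : list W) (x : W) : Prop := Forall Sgen l /\ prodl l = x.

(* the subgroup W_aff generated by S (the generators are involutions) *)
Definition in_Waff (x : W) : Prop := exists l, is_word l x.

(* (W_aff, S) is a Coxeter system: the s in S are involutions different
   from 1, and W_aff = <S> has the presentation with generators S and
   relations (st)^m = 1 holding in W_aff (i.e. the Coxeter relations
   s^2 = 1, (st)^{m(s,t)} = 1), expressed by its universal property. *)
Definition coxeter : Prop :=
  (forall s, Sgen s -> s <> gone /\ gmul s s = gone) /\
  forall (H : group) (f : W -> H),
    (forall s, Sgen s -> gmul (f s) (f s) = gone) ->
    (forall s t m, Sgen s -> Sgen t -> 0 < m -> gpow (gmul s t) m = gone ->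
        gpow (gmul (f s) (f t)) m = gone) ->
    exists F : W -> H, (forall s, Sgen s -> F s = f s) /\
      (forall x y, in_Waff x -> in_Waff y -> F (gmul x y) = gmul (F x) (F y)).

Variable Omega : W -> Prop.

Definition extended_coxeter : Prop :=
  coxeter /\
  Omega gone /\
  (forall u v, Omega u -> Omega v -> Omega (gmul u v)) /\
  (forall u, Omega u -> Omega (ginv u)) /\
  (forall u s, Omega u -> Sgen s -> Sgen (gmul (gmul u s) (ginv u))) /\
  (forall w, exists v u, in_Waff v /\ Omega u /\ w = gmul v u) /\
  (forall u, in_Waff u -> Omega u -> u = gone).

Definition word_length (x : W) (m : nat) : Prop :=
  (exists l, is_word l x /\ length l = m) /\
  (forall l, is_word l x -> m <= length l).

Definition ext_length (w : W) (m : nat) : Prop :=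
  exists v u, in_Waff v /\ Omega u /\ w = gmul v u /\ word_length v m.

Definition hyperplane (H : W) : Prop :=
  exists v s, in_Waff v /\ Sgen s /\ H = gmul (gmul v s) (ginv v).

(* H separates 1 and w = v u (v in W_aff, u in Omega; w identified with the
   chamber v): for a reduced word v = s_1 ... s_r, H is one of
   (s_1...s_{i-1}) s_i (s_1...s_{i-1})^{-1}. *)
Definition sep1 (H w : W) : Prop :=
  exists v u l i, in_Waff v /\ Omega u /\ w = gmul v u /\
    is_word l v /\ word_length v (length l) /\ i < length l /\
    H = gmul (gmul (prodl (firstn i l)) (nth i l gone)) (ginv (prodl (firstn i l))).

Definition separates (H v1 v2 : W) : Prop :=
  sep1 (gmul (gmul (ginv v1) H) v1) (gmul (ginv v1) v2).

End Defs.
Arguments prodl {W} l.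
Arguments is_word {W} Sgen l x.
Arguments in_Waff {W} Sgen x.
Arguments coxeter {W} Sgen.
Arguments extended_coxeter {W} Sgen Omega.
Arguments word_length {W} Sgen x m.
Arguments ext_length {W} Sgen Omega w m.
Arguments hyperplane {W} Sgen H.
Arguments sep1 {W} Sgen Omega H w.
Arguments separates {W} Sgen Omega H v1 v2.

(* For an extension pi : G -> W with kernel T and section n, a function
   h on the hyperplanes (i.e. on the generators a_H of Z[H]) with values in
   T, W-equivariant (W acting on T through conjugation by n(w)), with
   h(a_s) = n(s)^2.  A homomorphism Z[H] -> T is the same as such a
   function on the free generators. *)
Definition equiv_hom {W G : group} (Sgen : W -> Prop) (pi : G -> W) (n : W -> G)
    (h : W -> G) : Prop :=
  (forall H, hyperplane Sgen H -> pi (h H) = gone) /\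
  (forall w H, hyperplane Sgen H ->
     h (gmul (gmul w H) (ginv w)) = gmul (gmul (n w) (h H)) (ginv (n w))) /\
  (forall s, Sgen s -> h s = gmul (n s) (n s)).

(* Tits' argument. The Coxeter presentation, applied to s |-> (s, {s}) in the
   semidirect product W ⋉ (W -> Z/2), yields a cocycle N(xy) = N(x) + x N(y) that
   counts modulo 2 the occurrences of a hyperplane in the reflection sequence of
   any word for x. A reduced word repeats no reflection, so N(x) is the set of
   hyperplanes separating 1 and x, and l(xs) = l(x) + 1 exactly when x s x^-1 is
   not in N(x).
   Comparing n(x) n(s) = n(xs) = n(s'x) = n(s') n(x) for s' = x s x^-1 shows that,
   T being abelian, h(v s v^-1) := n(v) n(s)^2 n(v)^-1 is well defined and
   equivariant. Finally phi(w, y) is computed along a reduced word for y: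
   phi(w, ys) = phi(w, y) phi(wy, s), and phi(x, s) is h(x s x^-1) when this
   hyperplane separates 1 and x, and 1 otherwise. *)

From Stdlib Require Import List Arith Lia Bool Wf_nat.
From Stdlib Require Import Classical ClassicalEpsilon FunctionalExtensionality.
Import ListNotations.

Arguments gmulA {g} x y z.
Arguments gmul1l {g} x.
Arguments gmul1r {g} x.
Arguments gmulVl {g} x.
Arguments gmulVr {g} x.

Section GroupTheory.
Context {g : group}.
Implicit Types x y z : g.

Lemma gmulA' x y z : gmul (gmul x y) z = gmul x (gmul y z).
Proof. symmetry; apply gmulA. Qed.

Lemma gmulKV x y : gmul x (gmul (ginv x) y) = y.
Proof. rewrite gmulA, gmulVr, gmul1l; reflexivity. Qed.

Lemma gmulK x y : gmul (ginv x) (gmul x y) = y.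
Proof. rewrite gmulA, gmulVl, gmul1l; reflexivity. Qed.

Lemma gmulI x y z : gmul x y = gmul x z -> y = z.
Proof. intro E. rewrite <- (gmulK x y), E, gmulK; reflexivity. Qed.

Lemma gmulIr x y z : gmul y x = gmul z x -> y = z.
Proof.
  intro E. rewrite <- (gmul1r y), <- (gmulVr x), gmulA, E, <- gmulA, gmulVr, gmul1r.
  reflexivity.
Qed.

Lemma ginv_unique x y : gmul x y = gone -> y = ginv x.
Proof. intro E. apply (gmulI x). rewrite E, gmulVr; reflexivity. Qed.

Lemma ginvM x y : ginv (gmul x y) = gmul (ginv y) (ginv x).
Proof. symmetry; apply ginv_unique. rewrite gmulA', gmulKV, gmulVr; reflexivity. Qed.

Lemma ginvK x : ginv (ginv x) = x.
Proof. symmetry; apply ginv_unique, gmulVl. Qed.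

Lemma ginv1 : ginv (@gone g) = gone.
Proof. symmetry; apply ginv_unique, gmul1l. Qed.

Lemma prodl_cat (l1 l2 : list g) : prodl (l1 ++ l2) = gmul (prodl l1) (prodl l2).
Proof.
  induction l1 as [|x l1 IH]; simpl; [rewrite gmul1l | rewrite IH, gmulA]; reflexivity.
Qed.

Lemma gpowD x a b : gpow x (a + b) = gmul (gpow x a) (gpow x b).
Proof.
  induction a as [|a IH]; simpl; [rewrite gmul1l | rewrite IH, gmulA]; reflexivity.
Qed.

End GroupTheory.

Ltac gsimpl := repeat (rewrite ?gmulA', ?ginvM, ?ginvK, ?ginv1, ?gmul1l, ?gmul1r,
                         ?gmulVr, ?gmulVl, ?gmulKV, ?gmulK).

Section GroupMorphism.
Context {g h : group} (f : g -> h).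
Hypothesis fM : forall x y, f (gmul x y) = gmul (f x) (f y).

Lemma gmorph1 : f gone = gone.
Proof. apply (gmulI (f gone)). rewrite <- fM, !gmul1r; reflexivity. Qed.

Lemma gmorphV x : f (ginv x) = ginv (f x).
Proof. apply ginv_unique. rewrite <- fM, gmulVr. apply gmorph1. Qed.

End GroupMorphism.

Definition gconj {g : group} (x y : g) : g := gmul (gmul x y) (ginv x).

Section Conjugation.
Context {g : group}.
Implicit Types x y z : g.

Lemma gconjM x y z : gconj (gmul x y) z = gconj x (gconj y z).
Proof. unfold gconj; gsimpl; reflexivity. Qed.

Lemma gconj_inj x y z : gconj x y = gconj x z -> y = z.
Proof. unfold gconj; intro E. exact (gmulI _ _ _ (gmulIr _ _ _ E)). Qed.

Lemma gconjK x y : gconj (ginv x) (gconj x y) = y.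
Proof. unfold gconj; gsimpl; reflexivity. Qed.

Lemma gconjVK x y : gconj x (gconj (ginv x) y) = y.
Proof. unfold gconj; gsimpl; reflexivity. Qed.

Lemma gconj_eqV x y z : gconj x y = z <-> y = gconj (ginv x) z.
Proof. split; intro E; subst; [rewrite gconjK | rewrite gconjVK]; reflexivity. Qed.

Lemma prodl_map_gconj x (l : list g) : prodl (map (gconj x) l) = gconj x (prodl l).
Proof.
  induction l as [|y l IH]; simpl; [|rewrite IH]; unfold gconj; gsimpl; reflexivity.
Qed.

End Conjugation.

Definition eqcb {T : Type} (x y : T) : bool :=
  if excluded_middle_informative (x = y) then true else false.

Lemma eqcb_true {T} (x y : T) : eqcb x y = true <-> x = y.
Proof. unfold eqcb; destruct excluded_middle_informative; split; congruence. Qed.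

Lemma eqcb_false {T} (x y : T) : eqcb x y = false <-> x <> y.
Proof. unfold eqcb; destruct excluded_middle_informative; split; congruence. Qed.

Lemma eqcb_refl {T} (x : T) : eqcb x x = true.
Proof. apply eqcb_true; reflexivity. Qed.

Lemma eqcb_iff {T U} (x y : T) (a b : U) : (x = y <-> a = b) -> eqcb x y = eqcb a b.
Proof. intro E. unfold eqcb; do 2 destruct excluded_middle_informative; tauto. Qed.

Definition odd_count {T} (L : list T) (t : T) : bool := fold_right xorb false (map (eqcb t) L).

Lemma odd_count_In {T} (L : list T) t : odd_count L t = true -> In t L.
Proof.
  unfold odd_count; induction L as [|x L IH]; simpl; [discriminate|].
  destruct (eqcb t x) eqn:E; [rewrite eqcb_true in E; auto | rewrite xorb_false_l; auto].
Qed.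

Lemma odd_count_NoDup {T} (L : list T) t : NoDup L -> (odd_count L t = true <-> In t L).
Proof.
  intro ND; split; [apply odd_count_In|].
  induction ND as [|x L Hx ND IH]; simpl; [tauto|]. unfold odd_count in *; simpl.
  intros [E|Hin].
  - subst. rewrite eqcb_refl.
    destruct (fold_right xorb false (map (eqcb t) L)) eqn:E; [|reflexivity].
    exfalso; apply Hx, odd_count_In, E.
  - rewrite IH by exact Hin.
    replace (eqcb t x) with false; [reflexivity|].
    symmetry; apply eqcb_false; intro; subst; contradiction.
Qed.

Definition xor_group : group.
Proof.
  refine (@Group bool xorb false (fun b => b) _ _ _ _ _); intros.
  - rewrite xorb_assoc; reflexivity.
  - apply xorb_false_l.
  - apply xorb_false_r.
  - apply xorb_nilpotent.
  - apply xorb_nilpotent.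
Defined.

Section SemidirectProduct.
Variable W : group.

Definition sd_mul (a b : W * (W -> bool)) : W * (W -> bool) :=
  (gmul (fst a) (fst b), fun t => xorb (snd a t) (snd b (gconj (ginv (fst a)) t))).

Definition sd_inv (a : W * (W -> bool)) : W * (W -> bool) :=
  (ginv (fst a), fun t => snd a (gconj (fst a) t)).

Definition sdprod_xor : group.
Proof.
  refine (@Group (W * (W -> bool)) sd_mul (gone, fun _ => false) sd_inv _ _ _ _ _);
    unfold sd_mul, sd_inv; simpl.
  - intros [x a] [y b] [z c]; simpl. f_equal; [apply gmulA|].
    apply functional_extensionality; intro t.
    rewrite xorb_assoc, ginvM, gconjM; reflexivity.
  - intros [x a]; simpl; f_equal; [apply gmul1l|].
    apply functional_extensionality; intro t. unfold gconj; gsimpl; reflexivity.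
  - intros [x a]; simpl; f_equal; [apply gmul1r|].
    apply functional_extensionality; intro t. apply xorb_false_r.
  - intros [x a]; simpl; f_equal; [apply gmulVl|].
    apply functional_extensionality; intro t. rewrite ginvK. apply xorb_nilpotent.
  - intros [x a]; simpl; f_equal; [apply gmulVr|].
    apply functional_extensionality; intro t. rewrite gconjVK. apply xorb_nilpotent.
Defined.

End SemidirectProduct.

Section Coxeter.
Variables (W : group) (Sgen Omega : W -> Prop).
Hypothesis HW : extended_coxeter Sgen Omega.

Lemma Sgen_invol s : Sgen s -> gmul s s = gone.
Proof. intro Hs. destruct HW as [[H _] _]. apply H, Hs. Qed.

Lemma Sgen_neq1 s : Sgen s -> s <> gone.
Proof. intro Hs. destruct HW as [[H _] _]. apply H, Hs. Qed.

Lemma Sgen_ginv s : Sgen s -> ginv s = s.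
Proof. intro Hs. symmetry. apply ginv_unique, Sgen_invol, Hs. Qed.

Lemma Omega1 : Omega gone.
Proof. destruct HW as [_ [H _]]; exact H. Qed.

Lemma OmegaM u v : Omega u -> Omega v -> Omega (gmul u v).
Proof. destruct HW as [_ [_ [H _]]]; apply H. Qed.

Lemma OmegaV u : Omega u -> Omega (ginv u).
Proof. destruct HW as [_ [_ [_ [H _]]]]; apply H. Qed.

Lemma Omega_gconjS u s : Omega u -> Sgen s -> Sgen (gconj u s).
Proof. destruct HW as [_ [_ [_ [_ [H _]]]]]; apply H. Qed.

Lemma decomp_exists w : exists v u, in_Waff Sgen v /\ Omega u /\ w = gmul v u.
Proof. destruct HW as [_ [_ [_ [_ [_ [H _]]]]]]; apply H. Qed.

Lemma Waff_Omega_trivial u : in_Waff Sgen u -> Omega u -> u = gone.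
Proof. destruct HW as [_ [_ [_ [_ [_ [_ H]]]]]]; apply H. Qed.

Lemma Waff_word l : Forall Sgen l -> in_Waff Sgen (prodl l).
Proof. intro; exists l; split; auto. Qed.

Lemma Waff1 : in_Waff Sgen gone.
Proof. exact (Waff_word [] (Forall_nil _)). Qed.

Lemma WaffS s : Sgen s -> in_Waff Sgen s.
Proof. intro; exists [s]; split; simpl; auto. apply gmul1r. Qed.

Lemma WaffM x y : in_Waff Sgen x -> in_Waff Sgen y -> in_Waff Sgen (gmul x y).
Proof.
  intros [l1 [F1 <-]] [l2 [F2 <-]]. exists (l1 ++ l2).
  split; [apply Forall_app | apply prodl_cat]; auto.
Qed.

Lemma prodl_rev l : Forall Sgen l -> prodl (rev l) = ginv (prodl l).
Proof.
  induction 1 as [|s l Hs _ IH]; simpl; [rewrite ginv1; reflexivity|].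
  rewrite prodl_cat, IH; simpl. rewrite ginvM, gmul1r, (Sgen_ginv s) by exact Hs. reflexivity.
Qed.

Lemma WaffV x : in_Waff Sgen x -> in_Waff Sgen (ginv x).
Proof.
  intros [l [F <-]]. exists (rev l). split; [apply Forall_rev, F | apply prodl_rev, F].
Qed.

Lemma Omega_gconj_word u l : Omega u -> Forall Sgen l -> Forall Sgen (map (gconj u) l).
Proof. intros Hu F. induction F; simpl; constructor; auto using Omega_gconjS. Qed.

Lemma Omega_gconj_Waff u x : Omega u -> in_Waff Sgen x -> in_Waff Sgen (gconj u x).
Proof.
  intros Hu [l [F <-]]. exists (map (gconj u) l).
  split; [apply Omega_gconj_word | apply prodl_map_gconj]; auto.
Qed.

Lemma decomp_unique v u v' u' : in_Waff Sgen v -> Omega u -> in_Waff Sgen v' -> Omega u' ->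
  gmul v u = gmul v' u' -> v = v' /\ u = u'.
Proof.
  intros Hv Hu Hv' Hu' E.
  assert (E1 : gmul (ginv v') v = gmul u' (ginv u)).
  { apply (gmulI v'), (gmulIr u). rewrite gmulKV. gsimpl. exact E. }
  assert (E2 : gmul (ginv v') v = gone).
  { apply Waff_Omega_trivial; [auto using WaffM, WaffV|].
    rewrite E1. auto using OmegaM, OmegaV. }
  assert (v = v') as <-.
  { apply (gmulI (ginv v')). rewrite E2, gmulVl; reflexivity. }
  split; [reflexivity | exact (gmulI _ _ _ E)].
Qed.

Lemma coxeter_extend (H : group) (f : W -> H) :
  (forall s, Sgen s -> gmul (f s) (f s) = gone) ->
  (forall s t m, Sgen s -> Sgen t -> 0 < m -> gpow (gmul s t) m = gone ->
     gpow (gmul (f s) (f t)) m = gone) ->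
  exists F : W -> H, (forall l, Forall Sgen l -> F (prodl l) = prodl (map f l)) /\
    (forall x y, in_Waff Sgen x -> in_Waff Sgen y -> F (gmul x y) = gmul (F x) (F y)).
Proof.
  intros Hf1 Hf2. destruct HW as [[_ C] _]. destruct (C H f Hf1 Hf2) as [F [FS FM]].
  exists F; split; [|exact FM].
  assert (F1 : F gone = gone).
  { apply (gmulI (F gone)). rewrite <- FM by apply Waff1. rewrite gmul1l, gmul1r; reflexivity. }
  induction 1 as [|s l Hs Hl IH]; simpl; [exact F1|].
  rewrite FM, IH, FS by auto using WaffS, Waff_word. reflexivity.
Qed.

Lemma word_parity l l' : Forall Sgen l -> Forall Sgen l' -> prodl l = prodl l' ->
  Nat.odd (length l) = Nat.odd (length l').
Proof.
  destruct (coxeter_extend xor_group (fun _ => true)) as [F [FP _]].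
  - reflexivity.
  - intros s t m _ _ _ _. simpl. induction m; simpl; auto.
  - assert (Hodd : forall k : list W, prodl (W:=xor_group) (map (fun _ => true) k) = Nat.odd (length k)).
    { induction k as [|x k IH]; simpl; [reflexivity|].
      rewrite IH, Nat.odd_succ, <- Nat.negb_odd. reflexivity. }
    intros Fl Fl' E. rewrite <- !Hodd, <- !FP by assumption. rewrite E; reflexivity.
Qed.

Fixpoint refl_seq (l : list W) : list W :=
  match l with [] => [] | x :: l' => x :: map (gconj x) (refl_seq l') end.

Lemma refl_seq_length l : length (refl_seq l) = length l.
Proof. induction l; simpl; rewrite ?length_map; auto. Qed.

Lemma nth_refl_seq l i : i < length l ->
  nth i (refl_seq l) gone = gconj (prodl (firstn i l)) (nth i l gone).
Proof.
  revert i; induction l as [|x l IH]; simpl; intros i Hi; [lia|].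
  destruct i; simpl; [unfold gconj; gsimpl; reflexivity|].
  rewrite nth_indep with (d' := gconj x gone) by (rewrite length_map, refl_seq_length; lia).
  rewrite map_nth, IH, gconjM by lia. reflexivity.
Qed.

Lemma In_refl_seq l H : In H (refl_seq l) <->
  exists i, i < length l /\ H = gconj (prodl (firstn i l)) (nth i l gone).
Proof.
  split.
  - intro Hin. destruct (In_nth _ _ gone Hin) as [i [Hi <-]]. rewrite refl_seq_length in Hi.
    exists i; split; [|apply nth_refl_seq]; exact Hi.
  - intros [i [Hi ->]]. rewrite <- nth_refl_seq by exact Hi.
    apply nth_In. rewrite refl_seq_length; exact Hi.
Qed.

Lemma In_refl_seq_split l x : In x (refl_seq l) ->
  exists l1 y l2, l = l1 ++ y :: l2 /\ x = gconj (prodl l1) y.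
Proof.
  revert x; induction l as [|a l IH]; simpl; [tauto|]. intros x [<-|Hin].
  - exists [], a, l; split; [|unfold gconj; simpl; gsimpl]; reflexivity.
  - apply in_map_iff in Hin. destruct Hin as [x' [<- Hin]].
    destruct (IH _ Hin) as [l1 [y [l2 [-> ->]]]].
    exists (a :: l1), y, l2; split; [|simpl; rewrite gconjM]; reflexivity.
Qed.

Lemma refl_seq_rcons l s : refl_seq (l ++ [s]) = refl_seq l ++ [gconj (prodl l) s].
Proof.
  induction l as [|x l IH]; simpl; [unfold gconj; gsimpl; reflexivity|].
  rewrite IH, map_app; simpl. rewrite gconjM; reflexivity.
Qed.

Lemma refl_seq_map_gconj u l : refl_seq (map (gconj u) l) = map (gconj u) (refl_seq l).
Proof.
  induction l as [|x l IH]; simpl; [reflexivity|]. rewrite IH, !map_map. f_equal.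
  apply map_ext; intro y. rewrite <- !gconjM. f_equal. unfold gconj; gsimpl; reflexivity.
Qed.

Lemma refl_seq_hyperplane l x : Forall Sgen l -> In x (refl_seq l) -> hyperplane Sgen x.
Proof.
  intros F Hin. destruct (In_refl_seq_split _ _ Hin) as [l1 [y [l2 [-> ->]]]].
  apply Forall_app in F as [F1 F2]. inversion F2; subst.
  exists (prodl l1), y. auto using Waff_word.
Qed.

Definition refl_parity (l : list W) : W -> bool := odd_count (refl_seq l).

Definition sd_gen (s : W) : sdprod_xor W := (s, fun t => eqcb t s).

Lemma prodl_sd_gen l : prodl (map sd_gen l) = (prodl l, refl_parity l).
Proof.
  induction l as [|a l IH]; [reflexivity|].
  change (prodl (map sd_gen (a :: l))) with (gmul (sd_gen a) (prodl (map sd_gen l))).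
  rewrite IH. simpl; unfold sd_mul; simpl. f_equal.
  apply functional_extensionality; intro t. unfold refl_parity, odd_count; simpl.
  rewrite map_map. do 2 f_equal. apply map_ext; intro y.
  apply eqcb_iff. rewrite gconj_eqV, ginvK. split; intros ->; reflexivity.
Qed.

Section Braid.
Variables s t : W.
Hypotheses (Hs : Sgen s) (Ht : Sgen t).
Let st := gmul s t.

(* The reflections of the alternating word s t s t ... are the (st)^j s. *)
Fixpoint braid_refl (k j0 : nat) (x : W) : bool :=
  match k with
  | 0 => false
  | S k' => xorb (eqcb x (gmul (gpow st j0) s)) (braid_refl k' (S j0) x)
  end.

Lemma braid_refl_shift k j0 x : braid_refl k j0 (gconj (ginv st) x) = braid_refl k (S (S j0)) x.
Proof.
  revert j0; induction k as [|k IH]; intro j0; simpl; [reflexivity|]. rewrite IH. f_equal.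
  apply eqcb_iff. rewrite gconj_eqV, ginvK.
  assert (Est : gmul st (gpow st j0) = gmul (gpow st j0) st).
  { change (gmul st (gpow st j0)) with (gpow st (1 + j0)).
    rewrite Nat.add_comm, gpowD; simpl. rewrite gmul1r; reflexivity. }
  assert (E : gconj st (gmul (gpow st j0) s) = gmul (gpow st (S (S j0))) s).
  { unfold gconj; simpl. fold st. rewrite Est. unfold st.
    rewrite ginvM, (Sgen_ginv s), (Sgen_ginv t) by assumption. gsimpl. reflexivity. }
  rewrite E; tauto.
Qed.

Lemma gpow_sd_gen k : fst (gpow (gmul (sd_gen s) (sd_gen t)) k) = gpow st k /\
  forall x, snd (gpow (gmul (sd_gen s) (sd_gen t)) k) x = braid_refl (2 * k) 0 x.
Proof.
  induction k as [|k [IH1 IH2]]; [split; reflexivity|].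
  change (gpow (gmul (sd_gen s) (sd_gen t)) (S k))
    with (gmul (gmul (sd_gen s) (sd_gen t)) (gpow (gmul (sd_gen s) (sd_gen t)) k)).
  destruct (gpow (gmul (sd_gen s) (sd_gen t)) k) as [a b]. simpl in IH1, IH2. subst a.
  split; [reflexivity|]. intro x. simpl. rewrite IH2. fold st. rewrite braid_refl_shift.
  replace (k + S (k + 0)) with (S (k + (k + 0))) by lia. simpl. rewrite xorb_assoc. f_equal.
  - apply eqcb_iff. rewrite gmul1l; tauto.
  - f_equal. apply eqcb_iff. rewrite gconj_eqV, ginvK. unfold gconj, st.
    rewrite (Sgen_ginv s) by assumption. gsimpl. tauto.
Qed.

Lemma braid_refl_cat a b j0 x :
  braid_refl (a + b) j0 x = xorb (braid_refl a j0 x) (braid_refl b (j0 + a) x).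
Proof.
  revert j0; induction a as [|a IH]; intro j0; simpl; [rewrite Nat.add_0_r; reflexivity|].
  rewrite IH, xorb_assoc. do 3 f_equal. lia.
Qed.

Lemma braid_refl_period m k j0 x : gpow st m = gone -> braid_refl k (m + j0) x = braid_refl k j0 x.
Proof.
  intro Hm. revert j0; induction k as [|k IH]; intro j0; simpl; [reflexivity|].
  replace (S (m + j0)) with (m + S j0) by lia. rewrite IH, gpowD, Hm, gmul1l. reflexivity.
Qed.

Lemma sd_gen_braid m : gpow st m = gone -> gpow (gmul (sd_gen s) (sd_gen t)) m = gone.
Proof.
  intro Hm. destruct (gpow_sd_gen m) as [E1 E2].
  destruct (gpow (gmul (sd_gen s) (sd_gen t)) m) as [a b]. simpl in *. f_equal; [exact (eq_trans E1 Hm)|].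
  apply functional_extensionality; intro x. rewrite E2, Nat.add_0_r, braid_refl_cat.
  replace (0 + m) with (m + 0) by lia. rewrite braid_refl_period by exact Hm. apply xorb_nilpotent.
Qed.

End Braid.

Lemma inv_set_exists : exists N : W -> W -> bool,
  (forall l, Forall Sgen l -> N (prodl l) = refl_parity l) /\
  (forall x y t, in_Waff Sgen x -> in_Waff Sgen y ->
     N (gmul x y) t = xorb (N x t) (N y (gconj (ginv x) t))).
Proof.
  destruct (coxeter_extend (sdprod_xor W) sd_gen) as [F [FP FM]].
  - intros s Hs. simpl; unfold sd_mul; simpl. f_equal; [apply Sgen_invol, Hs|].
    apply functional_extensionality; intro t. rewrite (Sgen_ginv s) by exact Hs.
    replace (eqcb (gconj s t) s) with (eqcb t s); [apply xorb_nilpotent|].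
    apply eqcb_iff. rewrite gconj_eqV, (Sgen_ginv s) by exact Hs.
    unfold gconj. rewrite (Sgen_ginv s), Sgen_invol by exact Hs. gsimpl. tauto.
  - intros s t m Hs Ht _ E. exact (sd_gen_braid s t Hs Ht m E).
  - assert (Ffst : forall x, in_Waff Sgen x -> F x = (x, snd (F x))).
    { intros x [l [Fl E]]; subst x. rewrite FP, prodl_sd_gen; auto. }
    exists (fun x => snd (F x)); split.
    + intros l Fl. rewrite FP, prodl_sd_gen; auto.
    + intros x y t Hx Hy. rewrite FM, (Ffst x Hx), (Ffst y Hy); auto.
Qed.

(* For v in W_aff, [inv_set v H] says whether H separates 1 and v (see inv_set_reduced). *)
Definition inv_set : W -> W -> bool :=
  proj1_sig (constructive_indefinite_description _ inv_set_exists).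

Lemma inv_set_word l : Forall Sgen l -> inv_set (prodl l) = refl_parity l.
Proof.
  intro Hl; unfold inv_set; destruct constructive_indefinite_description as [N HN].
  exact (proj1 HN l Hl).
Qed.

Lemma inv_set_mul x y t : in_Waff Sgen x -> in_Waff Sgen y ->
  inv_set (gmul x y) t = xorb (inv_set x t) (inv_set y (gconj (ginv x) t)).
Proof.
  intros Hx Hy; unfold inv_set; destruct constructive_indefinite_description as [N HN].
  exact (proj2 HN x y t Hx Hy).
Qed.

Lemma inv_set_gconj_Omega u v t : Omega u -> in_Waff Sgen v ->
  inv_set (gconj u v) t = inv_set v (gconj (ginv u) t).
Proof.
  intros Hu [l [Fl <-]].
  rewrite <- prodl_map_gconj, !inv_set_word by auto using Omega_gconj_word.
  unfold refl_parity, odd_count. rewrite refl_seq_map_gconj, !map_map. f_equal.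
  apply map_ext; intro y. apply eqcb_iff. rewrite gconj_eqV, ginvK; tauto.
Qed.

Lemma inv_set_S s t : Sgen s -> inv_set s t = eqcb t s.
Proof.
  intro Hs. rewrite <- (gmul1r s) at 1. change (gmul s gone) with (prodl [s]).
  rewrite inv_set_word by auto. apply xorb_false_r.
Qed.

Definition reduced (l : list W) : Prop :=
  Forall Sgen l /\ word_length Sgen (prodl l) (length l).

Lemma reduced_word l v : is_word Sgen l v -> word_length Sgen v (length l) -> reduced l.
Proof. intros [F <-] Hl; split; assumption. Qed.

Lemma word_length_exists v : in_Waff Sgen v ->
  exists l, is_word Sgen l v /\ word_length Sgen v (length l).
Proof.
  intro Hv.
  destruct (dec_inh_nat_subset_has_unique_least_element
              (fun m => exists l, is_word Sgen l v /\ length l = m)) as [m [[[l [Hl <-]] Hmin] _]].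
  - intro; apply classic.
  - destruct Hv as [l Hl]. exists (length l), l; auto.
  - exists l. split; [exact Hl|]. split; [exists l; auto|].
    intros l' Hl'. apply Hmin. exists l'; auto.
Qed.

Lemma word_length_unique v m m' : word_length Sgen v m -> word_length Sgen v m' -> m = m'.
Proof.
  intros [[l [Hl <-]] Hmin] [[l' [Hl' <-]] Hmin'].
  apply Hmin in Hl'. apply Hmin' in Hl. lia.
Qed.

Lemma reduced_cons x l : reduced (x :: l) -> reduced l.
Proof.
  intros [F [_ Hmin]]. apply Forall_cons_iff in F as [Hx Fl]. split; [exact Fl|]. split.
  - exists l; split; [split|]; auto.
  - intros l' [F' E']. enough (S (length l') >= S (length l)) by lia.
    apply (Hmin (x :: l')). split; [auto | simpl; rewrite E'; reflexivity].
Qed.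

Lemma reduced_rcons l s : reduced (l ++ [s]) -> reduced l /\ Sgen s.
Proof.
  intros [F [_ Hmin]]. apply Forall_app in F as [Fl Fs]. apply Forall_cons_iff in Fs as [Hs _].
  split; [|assumption]. split; [exact Fl|]. split.
  - exists l; split; [split|]; auto.
  - intros l' [F' E']. enough (length (l' ++ [s]) >= length (l ++ [s])) by (rewrite !length_app in *; lia).
    apply Hmin. split; [apply Forall_app; auto | rewrite !prodl_cat, E'; reflexivity].
Qed.

(* A repetition in the reflection sequence lets one delete two letters of the word. *)
Lemma refl_seq_NoDup l : reduced l -> NoDup (refl_seq l).
Proof.
  induction l as [|x l IH]; intro R; simpl; [constructor|]. constructor.
  - intro Hin. apply in_map_iff in Hin as [y [E Hy]].
    assert (y = x) as ->.
    { apply (gconj_inj x). rewrite E. unfold gconj; gsimpl; reflexivity. }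
    destruct (In_refl_seq_split _ _ Hy) as [l1 [z [l2 [-> Ex]]]].
    destruct R as [F [_ Hmin]]. apply Forall_cons_iff in F as [Hx Fl].
    apply Forall_app in Fl as [F1 F2]. apply Forall_cons_iff in F2 as [Hz F2].
    enough (length (l1 ++ l2) >= length (x :: l1 ++ z :: l2)) by (simpl in *; rewrite !length_app in *; simpl in *; lia).
    apply Hmin. split; [apply Forall_app; auto|].
    simpl. rewrite !prodl_cat; simpl. rewrite Ex. unfold gconj. gsimpl.
    rewrite (gmulA z z), Sgen_invol, gmul1l by exact Hz. reflexivity.
  - apply NoDup_map_NoDup_ForallPairs; [intros ? ? _ _; apply gconj_inj|].
    apply IH, (reduced_cons x), R.
Qed.

Lemma inv_set_reduced l t : reduced l -> (inv_set (prodl l) t = true <-> In t (refl_seq l)).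
Proof. intro R. rewrite inv_set_word by apply R. apply odd_count_NoDup, refl_seq_NoDup, R. Qed.

Lemma inv_set_reduced_last l s : reduced (l ++ [s]) ->
  inv_set (prodl (l ++ [s])) (gconj (prodl l) s) = true.
Proof.
  intro R. apply inv_set_reduced; [exact R|].
  rewrite refl_seq_rcons. apply in_or_app; right; left; reflexivity.
Qed.

Lemma word_length_mulS b s m : Sgen s -> word_length Sgen b m ->
  word_length Sgen (gmul b s) (S m) \/
  exists m', m = S m' /\ word_length Sgen (gmul b s) m'.
Proof.
  intros Hs Hm.
  destruct Hm as [[l [[Fl El] <-]] Hmin].
  destruct (word_length_exists (gmul b s)) as [l' [[Fl' El'] Hm']].
  { apply WaffM; [exists l; split|apply WaffS]; auto. }
  assert (W1 : is_word Sgen (l ++ [s]) (gmul b s)).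
  { split; [apply Forall_app; auto|]. rewrite prodl_cat, El; simpl; rewrite gmul1r; reflexivity. }
  assert (W2 : is_word Sgen (l' ++ [s]) b).
  { split; [apply Forall_app; auto|]. rewrite prodl_cat, El'; simpl.
    rewrite gmul1r, gmulA', Sgen_invol, gmul1r by exact Hs. reflexivity. }
  assert (L1 : length l' <= S (length l)).
  { destruct Hm' as [_ Hmin']. apply Hmin' in W1. rewrite length_app in W1; simpl in W1; lia. }
  assert (L2 : length l <= S (length l')).
  { apply Hmin in W2. rewrite length_app in W2; simpl in W2; lia. }
  assert (P : Nat.odd (S (length l)) = Nat.odd (length l')).
  { rewrite <- Nat.add_1_r. change 1 with (length [s]). rewrite <- length_app.
    apply word_parity; [apply W1 | exact Fl' | rewrite El'; apply W1]. }
  rewrite Nat.odd_succ, <- Nat.negb_odd in P.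
  destruct (Nat.eq_dec (length l') (S (length l))) as [E|E]; [left; rewrite <- E; exact Hm'|].
  right. exists (length l'). split; [|exact Hm'].
  assert (length l' <> length l) by (intro E'; rewrite E' in P; destruct (Nat.odd (length l)); discriminate).
  lia.
Qed.

Lemma inv_set_mulS_up b s m : in_Waff Sgen b -> Sgen s ->
  word_length Sgen b m -> word_length Sgen (gmul b s) (S m) ->
  inv_set b (gconj b s) = false.
Proof.
  intros Hb Hs Hm Hms. destruct (word_length_exists b Hb) as [l [[Fl El] Hl]].
  rewrite (word_length_unique _ _ _ Hm Hl) in Hms.
  assert (Els : gmul b s = prodl (l ++ [s])) by (rewrite prodl_cat, El; simpl; rewrite gmul1r; reflexivity).
  assert (R : reduced (l ++ [s])).
  { split; [apply Forall_app; auto|]. rewrite <- Els, length_app, Nat.add_1_r. exact Hms. }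
  pose proof (inv_set_reduced_last l s R) as T.
  rewrite <- Els, El, inv_set_mul, (inv_set_S s), gconjK, eqcb_refl in T by auto using WaffS.
  destruct (inv_set b (gconj b s)); [discriminate | reflexivity].
Qed.

Lemma inv_set_mulS_down b s m : in_Waff Sgen b -> Sgen s ->
  word_length Sgen (gmul b s) m -> word_length Sgen b (S m) ->
  inv_set b (gconj b s) = true.
Proof.
  intros Hb Hs Hm Hbm. destruct (word_length_exists (gmul b s)) as [l [[Fl El] Hl]].
  { apply WaffM; auto using WaffS. }
  rewrite (word_length_unique _ _ _ Hm Hl) in Hbm.
  assert (Eb : b = prodl (l ++ [s])).
  { rewrite prodl_cat, El; simpl. rewrite gmul1r, gmulA', Sgen_invol, gmul1r by exact Hs. reflexivity. }
  assert (Ec : gconj b s = gconj (prodl l) s).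
  { rewrite El. unfold gconj. gsimpl. reflexivity. }
  rewrite Ec, Eb at 1. apply inv_set_reduced_last.
  split; [apply Forall_app; auto|]. rewrite <- Eb, length_app, Nat.add_1_r. exact Hbm.
Qed.

Lemma decomp_exists_pair w :
  exists p : W * W, in_Waff Sgen (fst p) /\ Omega (snd p) /\ w = gmul (fst p) (snd p).
Proof. destruct (decomp_exists w) as [v [u H]]. exists (v, u); exact H. Qed.

Definition decomp (w : W) : W * W :=
  proj1_sig (constructive_indefinite_description _ (decomp_exists_pair w)).

Lemma decomp_spec w :
  in_Waff Sgen (fst (decomp w)) /\ Omega (snd (decomp w)) /\ w = gmul (fst (decomp w)) (snd (decomp w)).
Proof. unfold decomp; destruct constructive_indefinite_description; assumption. Qed.

Lemma decomp_mul v u : in_Waff Sgen v -> Omega u -> decomp (gmul v u) = (v, u).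
Proof.
  intros Hv Hu. destruct (decomp_spec (gmul v u)) as [Hv' [Hu' E]].
  destruct (decomp_unique _ _ _ _ Hv Hu Hv' Hu' E) as [E1 E2].
  destruct (decomp (gmul v u)); simpl in *; subst; reflexivity.
Qed.

Lemma ext_length_mul v u m : in_Waff Sgen v -> Omega u ->
  (ext_length Sgen Omega (gmul v u) m <-> word_length Sgen v m).
Proof.
  intros Hv Hu; split; [|intro Hl; exists v, u; auto].
  intros [v' [u' [Hv' [Hu' [E Hl]]]]].
  destruct (decomp_unique _ _ _ _ Hv Hu Hv' Hu' E) as [-> ->]; exact Hl.
Qed.

Lemma ext_length_Waff v m : in_Waff Sgen v -> (ext_length Sgen Omega v m <-> word_length Sgen v m).
Proof. intro Hv. rewrite <- (gmul1r v) at 1. apply ext_length_mul; [exact Hv | apply Omega1]. Qed.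

Lemma ext_length_exists w : exists m, ext_length Sgen Omega w m.
Proof.
  destruct (decomp_spec w) as [Hv [Hu E]]. destruct (word_length_exists _ Hv) as [l [_ Hl]].
  exists (length l). rewrite E. apply ext_length_mul; assumption.
Qed.

Lemma ext_length_mulOmega w u m : Omega u ->
  ext_length Sgen Omega w m -> ext_length Sgen Omega (gmul w u) m.
Proof.
  intros Hu [v [u' [Hv [Hu' [-> Hl]]]]].
  exists v, (gmul u' u). split; [|split; [|split]]; auto using OmegaM, gmulA'.
Qed.

Lemma ext_length_Omega u : Omega u -> ext_length Sgen Omega u 0.
Proof.
  intro Hu. rewrite <- (gmul1l u). apply ext_length_mul; [apply Waff1 | exact Hu |].
  split; [exists []; repeat split; auto | intros; lia].
Qed.

Lemma ext_length_S s : Sgen s -> ext_length Sgen Omega s 1.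
Proof.
  intro Hs. apply ext_length_Waff; [apply WaffS, Hs|]. split.
  - exists [s]; repeat split; auto. apply gmul1r.
  - intros [|x l] [_ E]; simpl; [|lia]. exfalso; exact (Sgen_neq1 s Hs (eq_sym E)).
Qed.

(* The chamber of w = v u is that of v. *)
Definition inv_set_ext (w : W) : W -> bool := inv_set (fst (decomp w)).

Lemma inv_set_ext_mul x y t :
  inv_set_ext (gmul x y) t = xorb (inv_set_ext x t) (inv_set_ext y (gconj (ginv x) t)).
Proof.
  unfold inv_set_ext. destruct (decomp_spec x) as [Hv1 [Hu1 Ex]]. destruct (decomp_spec y) as [Hv2 [Hu2 Ey]].
  destruct (decomp x) as [v1 u1], (decomp y) as [v2 u2]; simpl in *. subst x y.
  replace (gmul (gmul v1 u1) (gmul v2 u2)) with (gmul (gmul v1 (gconj u1 v2)) (gmul u1 u2))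
    by (unfold gconj; gsimpl; reflexivity).
  rewrite decomp_mul by auto using WaffM, Omega_gconj_Waff, OmegaM; simpl.
  rewrite inv_set_mul, inv_set_gconj_Omega by auto using Omega_gconj_Waff.
  rewrite ginvM, gconjM. reflexivity.
Qed.

Lemma ext_length_mulS a s : Sgen s -> exists m, ext_length Sgen Omega a m /\
  ((ext_length Sgen Omega (gmul a s) (S m) /\ inv_set_ext a (gconj a s) = false) \/
   (exists m', m = S m' /\ ext_length Sgen Omega (gmul a s) m' /\ inv_set_ext a (gconj a s) = true)).
Proof.
  intro Hs. destruct (decomp_spec a) as [Hv [Hu Ea]]. unfold inv_set_ext.
  destruct (decomp a) as [v u]; simpl in *. subst a.
  set (s' := gconj u s). assert (Hs' : Sgen s') by (apply Omega_gconjS; assumption).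
  assert (Eas : gmul (gmul v u) s = gmul (gmul v s') u) by (unfold s', gconj; gsimpl; reflexivity).
  assert (Hvs : in_Waff Sgen (gmul v s')) by (apply WaffM; auto using WaffS).
  rewrite Eas, gconjM. fold s'.
  destruct (word_length_exists v Hv) as [l [_ Hl]]. exists (length l).
  rewrite !ext_length_mul by assumption. split; [exact Hl|].
  destruct (word_length_mulS v s' _ Hs' Hl) as [Hup | [m' [Em Hdown]]].
  - left. split; [exact Hup|]. exact (inv_set_mulS_up v s' _ Hv Hs' Hl Hup).
  - right. exists m'. rewrite Em in Hl. rewrite ext_length_mul by assumption.
    split; [exact Em | split; [exact Hdown |]].
    exact (inv_set_mulS_down v s' m' Hv Hs' Hdown Hl).
Qed.

Lemma sep1_inv_set_ext H w : sep1 Sgen Omega H w <-> inv_set_ext w H = true.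
Proof.
  unfold inv_set_ext. split.
  - intros [v [u [l [i [Hv [Hu [-> [Hl [Hlen [Hi EH]]]]]]]]]].
    rewrite decomp_mul by assumption; simpl. destruct Hl as [F <-].
    apply inv_set_reduced; [split; assumption|]. apply In_refl_seq. exists i; auto.
  - intro HN. destruct (decomp_spec w) as [Hv [Hu Ew]].
    destruct (word_length_exists _ Hv) as [l [Hl Hlen]].
    pose proof (reduced_word _ _ Hl Hlen) as R. destruct Hl as [F El].
    rewrite <- El in HN. apply inv_set_reduced, In_refl_seq in HN as [i [Hi EH]]; [|exact R].
    exists (fst (decomp w)), (snd (decomp w)), l, i.
    exact (conj Hv (conj Hu (conj Ew (conj (conj F El) (conj Hlen (conj Hi EH)))))).
Qed.

Lemma hyperplane_gconj w H : hyperplane Sgen H -> hyperplane Sgen (gconj w H).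
Proof.
  intros [P [s [HP [Hs ->]]]]. destruct (decomp_spec w) as [Hv [Hu ->]].
  destruct (decomp w) as [v u]; simpl in *.
  exists (gmul v (gconj u P)), (gconj u s). repeat split; auto using WaffM, Omega_gconj_Waff, Omega_gconjS.
  change (gmul (gmul ?a ?b) (ginv ?a)) with (gconj a b). unfold gconj; gsimpl; reflexivity.
Qed.

Lemma inv_set_ext_Waff v t : in_Waff Sgen v -> inv_set_ext v t = inv_set v t.
Proof. intro Hv. unfold inv_set_ext. rewrite <- (gmul1r v) at 1. rewrite decomp_mul; auto using Omega1. Qed.

Lemma inv_set_ext_reduced_last l s : reduced (l ++ [s]) ->
  inv_set_ext (prodl l) (gconj (prodl l) s) = false.
Proof.
  intro R. destruct (reduced_rcons _ _ R) as [[Fl Hl] Hs].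
  rewrite inv_set_ext_Waff by (apply Waff_word, Fl).
  apply (inv_set_mulS_up _ _ (length l)); auto using Waff_word.
  replace (gmul (prodl l) s) with (prodl (l ++ [s])) by (rewrite prodl_cat; simpl; rewrite gmul1r; reflexivity).
  rewrite <- Nat.add_1_r. change 1 with (length [s]). rewrite <- length_app. apply R.
Qed.

Definition sep_list (w : W) (l : list W) : list W :=
  filter (inv_set_ext w) (map (gconj w) (refl_seq l)).

Lemma sep_list_NoDup w l : reduced l -> NoDup (sep_list w l).
Proof.
  intro R. apply NoDup_filter, NoDup_map_NoDup_ForallPairs, refl_seq_NoDup, R.
  intros ? ? _ _; apply gconj_inj.
Qed.

Lemma sep_list_rcons w l s : reduced (l ++ [s]) ->
  sep_list w (l ++ [s]) = sep_list w l ++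
    (if inv_set_ext (gmul w (prodl l)) (gconj (gmul w (prodl l)) s)
     then [gconj (gmul w (prodl l)) s] else []).
Proof.
  intro R. unfold sep_list. rewrite refl_seq_rcons, map_app, filter_app. simpl.
  rewrite inv_set_ext_mul, !gconjM, gconjK, inv_set_ext_reduced_last, xorb_false_r by exact R.
  reflexivity.
Qed.

Lemma In_sep_list w v u l H : in_Waff Sgen v -> Omega u -> is_word Sgen l v ->
  word_length Sgen v (length l) ->
  In H (sep_list w l) <->
  hyperplane Sgen H /\ separates Sgen Omega H gone w /\ separates Sgen Omega H w (gmul w (gmul v u)).
Proof.
  intros Hv Hu Hl Hlen. pose proof (reduced_word _ _ Hl Hlen) as R. destruct Hl as [Fl El].
  unfold sep_list, separates. rewrite filter_In, ginv1, gmul1l, gmul1r, gmul1l, gmulK, !sep1_inv_set_ext.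
  replace (gmul (gmul (ginv w) H) w) with (gconj (ginv w) H) by (unfold gconj; rewrite ginvK; reflexivity).
  unfold inv_set_ext at 3. rewrite decomp_mul by assumption; simpl. rewrite <- El, inv_set_reduced by exact R.
  assert (Hmap : In H (map (gconj w) (refl_seq l)) <-> In (gconj (ginv w) H) (refl_seq l)).
  { rewrite in_map_iff. split.
    - intros [x [<- Hx]]. rewrite gconjK; exact Hx.
    - intro Hx. exists (gconj (ginv w) H). split; [apply gconjVK | exact Hx]. }
  rewrite Hmap. split; [|tauto]. intros [Hin Hsep]. repeat split; auto.
  rewrite <- (gconjVK w H). apply hyperplane_gconj, (refl_seq_hyperplane l), Hin. exact Fl.
Qed.

Section Extension.
Variables (G : group) (pi : G -> W) (n : W -> G).
Hypothesis pi_mul : forall x y, pi (gmul x y) = gmul (pi x) (pi y).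
Hypothesis T_abelian : forall a b, pi a = gone -> pi b = gone -> gmul a b = gmul b a.
Hypothesis n_sec : forall w, pi (n w) = w.
Hypothesis n_mul : forall w w' m m', ext_length Sgen Omega w m -> ext_length Sgen Omega w' m' ->
  ext_length Sgen Omega (gmul w w') (m + m') -> n (gmul w w') = gmul (n w) (n w').

Lemma gconj_fiber g1 g2 t : pi g1 = pi g2 -> pi t = gone -> gconj g1 t = gconj g2 t.
Proof.
  intros E Ht. set (tau := gmul (ginv g2) g1).
  assert (Htau : pi tau = gone) by (unfold tau; rewrite pi_mul, (gmorphV pi pi_mul), E, gmulVl; reflexivity).
  replace g1 with (gmul g2 tau) by (unfold tau; gsimpl; reflexivity).
  unfold gconj. gsimpl. rewrite (gmulA tau t), (T_abelian tau t) by assumption. gsimpl. reflexivity.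
Qed.

Lemma n1 : n gone = gone.
Proof.
  pose proof (ext_length_Omega _ Omega1) as H0.
  pose proof (n_mul gone gone 0 0 H0 H0) as E. rewrite gmul1l in E.
  apply (gmulI (n gone)). rewrite <- (E H0), gmul1r. reflexivity.
Qed.

Lemma n_mulS a s m : Sgen s -> ext_length Sgen Omega a m ->
  ext_length Sgen Omega (gmul a s) (S m) -> n (gmul a s) = gmul (n a) (n s).
Proof. intros Hs Ha Has. apply (n_mul a s m 1); [| apply ext_length_S |]; rewrite ?Nat.add_1_r; assumption. Qed.

Lemma n_sq_gconj_up x s s' m : Sgen s -> Sgen s' -> gconj x s = s' ->
  ext_length Sgen Omega x m -> ext_length Sgen Omega (gmul x s) (S m) ->
  gconj (n x) (gmul (n s) (n s)) = gmul (n s') (n s').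
Proof.
  intros Hs Hs' E Hx Hxs.
  assert (Exs : gmul x s = gmul s' x) by (subst s'; unfold gconj; gsimpl; reflexivity).
  assert (En : gmul (n x) (n s) = gmul (n s') (n x)).
  { rewrite <- (n_mulS x s m), <- (n_mul s' x 1 m), Exs by (rewrite <- ?Exs; auto using ext_length_S).
    reflexivity. }
  assert (Ec : gconj (n x) (n s) = n s') by (unfold gconj; rewrite En; gsimpl; reflexivity).
  rewrite <- Ec. unfold gconj. gsimpl. reflexivity.
Qed.

Lemma n_sq_gconj x s s' : Sgen s -> Sgen s' -> gconj x s = s' ->
  gconj (n x) (gmul (n s) (n s)) = gmul (n s') (n s').
Proof.
  intros Hs Hs' E. destruct (ext_length_mulS x s Hs) as [m [Hm [[Hup _] | [m' [Em [Hdown _]]]]]].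
  - exact (n_sq_gconj_up x s s' m Hs Hs' E Hm Hup).
  - set (y := gmul x s) in *.
    assert (Ey : gmul y s = x) by (unfold y; rewrite gmulA', Sgen_invol, gmul1r by exact Hs; reflexivity).
    assert (Cy : gconj y s = s').
    { rewrite <- E. unfold y, gconj. gsimpl. reflexivity. }
    rewrite <- Ey in Hm. rewrite Em in Hm.
    rewrite <- Ey, (n_mulS y s m'), gconjM by assumption.
    rewrite <- (n_sq_gconj_up y s s' m' Hs Hs' Cy Hdown Hm). f_equal.
    unfold gconj; gsimpl; reflexivity.
Qed.

Lemma n_sq_gconj_wd v s v' s' : Sgen s -> Sgen s' -> gconj v s = gconj v' s' ->
  gconj (n v) (gmul (n s) (n s)) = gconj (n v') (gmul (n s') (n s')).
Proof.
  intros Hs Hs' E. set (x := gmul (ginv v') v).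
  assert (Cx : gconj x s = s') by (unfold x; rewrite gconjM, E, gconjK; reflexivity).
  rewrite (gconj_fiber (n v) (gmul (n v') (n x))).
  - rewrite gconjM, (n_sq_gconj x s s'); auto.
  - rewrite pi_mul, !n_sec. unfold x. gsimpl; reflexivity.
  - rewrite pi_mul, n_sec, Sgen_invol by exact Hs. reflexivity.
Qed.

Definition hn (H : W) : G :=
  let p := epsilon (inhabits (gone, gone))
             (fun p : W * W => Sgen (snd p) /\ H = gconj (fst p) (snd p)) in
  gconj (n (fst p)) (gmul (n (snd p)) (n (snd p))).

Lemma hn_gconj v s : Sgen s -> hn (gconj v s) = gconj (n v) (gmul (n s) (n s)).
Proof.
  intro Hs. unfold hn.
  destruct (epsilon_spec (inhabits (gone, gone))
              (fun p : W * W => Sgen (snd p) /\ gconj v s = gconj (fst p) (snd p))) as [Hs' E].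
  - exists (v, s); auto.
  - symmetry; apply n_sq_gconj_wd; auto.
Qed.

Lemma hn_equiv : equiv_hom Sgen pi n hn.
Proof.
  split; [|split].
  - intros H [v [s [Hv [Hs ->]]]]. fold (gconj v s). rewrite hn_gconj by exact Hs.
    unfold gconj. rewrite !pi_mul, (gmorphV pi pi_mul), !n_sec, Sgen_invol by exact Hs.
    gsimpl; reflexivity.
  - intros w H [v [s [Hv [Hs ->]]]]. fold (gconj v s) (gconj w (gconj v s)) (gconj (n w) (hn (gconj v s))).
    rewrite <- gconjM, !hn_gconj, <- gconjM by exact Hs.
    apply gconj_fiber; [rewrite pi_mul, !n_sec; reflexivity|].
    rewrite pi_mul, n_sec, Sgen_invol by exact Hs. reflexivity.
  - intros s Hs. replace s with (gconj gone s) at 1 by (unfold gconj; gsimpl; reflexivity).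
    rewrite hn_gconj, n1 by exact Hs. unfold gconj; gsimpl; reflexivity.
Qed.

Lemma hn_unique h' : equiv_hom Sgen pi n h' -> forall H, hyperplane Sgen H -> h' H = hn H.
Proof.
  intros [_ [Hequiv HS]] H [v [s [Hv [Hs ->]]]].
  assert (Hyp : hyperplane Sgen s) by (exists gone, s; repeat split; auto using Waff1; gsimpl; reflexivity).
  rewrite (Hequiv v s Hyp), HS by exact Hs. fold (gconj v s). rewrite hn_gconj by exact Hs. reflexivity.
Qed.

Definition phi (w w' : W) : G := gmul (gmul (n w) (n w')) (ginv (n (gmul w w'))).

Lemma phi_mulS a s : Sgen s ->
  phi a s = if inv_set_ext a (gconj a s) then hn (gconj a s) else gone.
Proof.
  intro Hs. unfold phi.
  destruct (ext_length_mulS a s Hs) as [m [Hm [[Hup ->] | [m' [Em [Hdown ->]]]]]].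
  - rewrite (n_mulS a s m) by assumption. gsimpl; reflexivity.
  - assert (Ea : gmul (gmul a s) s = a) by (rewrite gmulA', Sgen_invol, gmul1r by exact Hs; reflexivity).
    assert (Hn : n a = gmul (n (gmul a s)) (n s)).
    { rewrite <- Ea at 1. apply (n_mulS _ _ m'); [exact Hs | exact Hdown | rewrite Ea, <- Em; exact Hm]. }
    replace (gconj a s) with (gconj (gmul a s) s) by (unfold gconj; gsimpl; reflexivity).
    rewrite Hn, hn_gconj by exact Hs. unfold gconj; gsimpl; reflexivity.
Qed.

Lemma phi_cocycle w x y : n (gmul x y) = gmul (n x) (n y) ->
  phi w (gmul x y) = gmul (phi w x) (phi (gmul w x) y).
Proof. intro E. unfold phi. rewrite E, gmulA. gsimpl. reflexivity. Qed.

Lemma phi_mulOmega w v u : in_Waff Sgen v -> Omega u -> phi w (gmul v u) = phi w v.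
Proof.
  intros Hv Hu. pose proof (ext_length_Omega u Hu) as Hu0.
  destruct (word_length_exists v Hv) as [l [_ Hl]].
  destruct (ext_length_exists (gmul w v)) as [k Hk].
  assert (En : n (gmul v u) = gmul (n v) (n u)).
  { apply (n_mul v u (length l) 0); [| exact Hu0 |]; rewrite ?Nat.add_0_r;
      [apply ext_length_Waff | apply ext_length_mul]; assumption. }
  assert (Enw : n (gmul (gmul w v) u) = gmul (n (gmul w v)) (n u)).
  { apply (n_mul _ u k 0); [exact Hk | exact Hu0 |].
    rewrite Nat.add_0_r. apply ext_length_mulOmega; assumption. }
  unfold phi. rewrite (gmulA w v u), Enw, En. gsimpl. reflexivity.
Qed.

Lemma phi_reduced l w : reduced l -> phi w (prodl l) = prodl (map hn (sep_list w l)).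
Proof.
  induction l as [|s l IH] using rev_ind; intro R.
  - unfold phi. simpl. rewrite n1, !gmul1r, gmulVr. reflexivity.
  - destruct (reduced_rcons _ _ R) as [Rl Hs].
    assert (Els : prodl (l ++ [s]) = gmul (prodl l) s) by (rewrite prodl_cat; simpl; rewrite gmul1r; reflexivity).
    assert (Hl : ext_length Sgen Omega (prodl l) (length l)) by (apply ext_length_Waff; [apply Waff_word|]; apply Rl).
    assert (Hls : ext_length Sgen Omega (gmul (prodl l) s) (S (length l))).
    { rewrite <- Els, <- Nat.add_1_r. change 1 with (length [s]). rewrite <- length_app.
      apply ext_length_Waff; [apply Waff_word|]; apply R. }
    rewrite Els, phi_cocycle, IH, phi_mulS, sep_list_rcons, map_app, prodl_cat by eauto using n_mulS.
    destruct inv_set_ext; simpl; rewrite ?gmul1r; reflexivity.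
Qed.

End Extension.
End Coxeter.

Theorem lemma2p8p2 (W G : group) (Sgen Omega : W -> Prop)
  (HW : extended_coxeter Sgen Omega)
  (pi : G -> W)
  (pi_mul : forall x y, pi (gmul x y) = gmul (pi x) (pi y))
  (pi_surj : forall w, exists g, pi g = w)
  (T_abelian : forall a b, pi a = gone -> pi b = gone -> gmul a b = gmul b a)
  (n : W -> G)
  (n_sec : forall w, pi (n w) = w)
  (n_mul : forall w w' m m', ext_length Sgen Omega w m -> ext_length Sgen Omega w' m' ->
      ext_length Sgen Omega (gmul w w') (m + m') -> n (gmul w w') = gmul (n w) (n w')) :
  exists h : W -> G,
    equiv_hom Sgen pi n h /\
    (forall h', equiv_hom Sgen pi n h' -> forall H, hyperplane Sgen H -> h' H = h H) /\
    (forall w w', exists L : list W,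
        NoDup L /\
        (forall H, In H L <->
           hyperplane Sgen H /\ separates Sgen Omega H gone w /\
           separates Sgen Omega H w (gmul w w')) /\
        gmul (gmul (n w) (n w')) (ginv (n (gmul w w'))) = prodl (map h L)).
Proof.
  (* pi_surj is implied by n_sec. *)
  exists (hn W Sgen G n).
  split; [|split]; [eapply hn_equiv | eapply hn_unique |]; eauto.
  intros w w'. destruct (decomp_spec W Sgen Omega HW w') as [Hv [Hu ->]].
  destruct (decomp W Sgen Omega HW w') as [v u]; simpl in *.
  destruct (word_length_exists W Sgen v Hv) as [l [Hl Hlen]].
  pose proof (reduced_word W Sgen l v Hl Hlen) as R.
  exists (sep_list W Sgen Omega HW w l). split; [|split].
  - exact (sep_list_NoDup W Sgen Omega HW w l R).
  - intro H. exact (In_sep_list W Sgen Omega HW w v u l H Hv Hu Hl Hlen).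
  - change (phi W G n w (gmul v u) = prodl (map (hn W Sgen G n) (sep_list W Sgen Omega HW w l))).
    rewrite (phi_mulOmega W Sgen Omega HW) by assumption. destruct Hl as [_ <-].
    eapply phi_reduced; eassumption.
Qed.
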